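(* Let $\mathcal A_+,\mathcal A_-\subseteq\mathbb R^n$ be disjoint finite sets such that $\mathcal A=\mathcal A_+\cup\mathcal A_-$ is full dimensional and $(\mathcal A_+,\mathcal A_-)$ is nonseparable, and fix $D\in\mathcal F_n(\mathcal A_+)$ with $\mathcal A_-\subseteq D$; let $r=\#\Lambda(\mathcal A_+,D)$. Let $f\in\mathcal S(\mathcal A_+,\mathcal A_-)$ have nonsigned coefficients $c\in\mathbb R^{\mathcal A}_{>0}$ with $\mathbb 1\in\operatorname{Sing}_{>0}(f)$. Then $\mathcal Z(\Lambda(\mathcal A_+,D),c)\cap\mathbb R^r_{\ge0}\neq\varnothing$.
   Context: A signomial with signed support $(\mathcal A_+,\mathcal A_-)$ is $f(x)=\sum_{a\in\mathcal A_+}c_ax^a-\sum_{b\in\mathcal A_-}c_bx^b$ on $\mathbb R^n_{>0}$ with all $c_a,c_b>0$; $\mathcal S(\mathcal A_+,\mathcal A_-)$ is the set of these. Full dimensional: $\dim\operatorname{conv}(\mathcal A)=n$. $\operatorname{Sing}_{>0}(f)$ is the set of $x\in\mathbb R^n_{>0}$ with $f(x)=x_1\partial_{x_1}f(x)=\dots=x_n\partial_{x_n}f(x)=0$; $\mathbb 1=(1,\dots,1)$. $\mathcal F(\mathcal A_+)$ is the common refinement of all regular polyhedral subdivisions of $\mathcal A_+$, $\mathcal F_n(\mathcal A_+)$ its $n$-dimensional cells; $(\mathcal A_+,\mathcal A_-)$ is nonseparable if $\mathcal A_-\subseteq\operatorname{relint}\operatorname{conv}(\mathcal A_+)$ and some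 $D\in\mathcal F_n(\mathcal A_+)$ contains $\mathcal A_-$. $\Lambda(\mathcal A_+,D)=\{\Delta_1,\dots,\Delta_r\}$ is the set of $n$-simplices with vertices in $\mathcal A_+$ with $\operatorname{relint}(D)\subseteq\operatorname{relint}(\Delta)$. With $\lambda^b_{a,k}$ the barycentric coordinates of $b\in\mathcal A_-$ w.r.t. the vertices of $\Delta_k$, $\mathcal Z(\Lambda,c)\subseteq\mathbb R^r$ is the solution set of $c_a=\sum_{k:\,a\in\operatorname{vertices}(\Delta_k)}\delta_k\big(\sum_{b\in\mathcal A_-}\lambda^b_{a,k}c_b\big)$, $a\in\mathcal A_+$, in the unknowns $\delta_1,\dots,\delta_r$. *)

From HB Require Import structures.
From mathcomp Require Import all_boot all_order all_algebra.
From mathcomp Require Import all_classical all_reals all_analysis.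
Set Implicit Arguments. Unset Strict Implicit. Unset Printing Implicit Defensive.
Import Order.TTheory GRing.Theory Num.Theory.
Import numFieldNormedType.Exports.
Local Open Scope classical_set_scope.
Local Open Scope ring_scope.

Section Defs.
Variables (R : realType) (n : nat).
Notation pt := 'rV[R]_n.

Definition dotv (u x : pt) : R := \sum_(k < n) u 0 k * x 0 k.

Definition convhull (S : set pt) : set pt :=
  [set x | exists (k : nat) (w : 'I_k -> R) (y : 'I_k -> pt),
     (forall i, S (y i)) /\ (forall i, 0 <= w i) /\ \sum_i w i = 1 /\
     x = \sum_i w i *: y i].

Definition aff_hull (S : set pt) : set pt :=
  [set x | exists (k : nat) (w : 'I_k -> R) (y : 'I_k -> pt),
     (forall i, S (y i)) /\ \sum_i w i = 1 /\ x = \sum_i w i *: y i].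

Definition relint (C : set pt) : set pt :=
  [set x | C x /\ exists e : R, 0 < e /\
     forall y, aff_hull C y -> `|y - x| < e -> C y].

Definition full_dim (S : set pt) : Prop := aff_hull S = setT.

Section Config.
Variables (p : nat) (ap : 'I_p -> pt).

Definition pts (V : {set 'I_p}) : set pt :=
  [set x | exists i, i \in V /\ x = ap i].

(* cells of the regular polyhedral subdivision of A_+ induced by heights w:
   projections of the lower faces of the lifted configuration *)
Definition reg_cell (w : 'I_p -> R) (C : set pt) : Prop :=
  exists (u : pt) (h : R),
    (forall i, dotv u (ap i) + h <= w i) /\
    (exists i, dotv u (ap i) + h = w i) /\
    C = convhull (pts [set i | dotv u (ap i) + h == w i]).

(* cells of the common refinement F(A_+) of all regular subdivisions:
   intersections of one cell from each regular subdivision *)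
Definition refine_cell (D : set pt) : Prop :=
  exists sel : ('I_p -> R) -> set pt,
    (forall w, reg_cell w (sel w)) /\ D = [set x | forall w, sel w x].

Definition Fn_cell (D : set pt) : Prop := refine_cell D /\ full_dim D.

(* n-simplices with vertices in A_+ whose relative interior contains relint D *)
Definition in_Lambda (D : set pt) (V : {set 'I_p}) : Prop :=
  #|V| = n.+1 /\ full_dim (convhull (pts V)) /\
  relint D `<=` relint (convhull (pts V)).

Definition is_bary (V : {set 'I_p}) (b : pt) (lam : 'I_p -> R) : Prop :=
  (forall i, i \notin V -> lam i = 0) /\ \sum_i lam i = 1 /\
  \sum_i lam i *: ap i = b.

Definition bary (V : {set 'I_p}) (b : pt) : 'I_p -> R :=
  match pselect (exists lam, is_bary V b lam) with
  | left h => projT1 (cid h)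
  | right _ => fun _ => 0
  end.

Variables (m : nat) (am : 'I_m -> pt).

Definition allpts : set pt :=
  [set x | (exists i, x = ap i) \/ (exists j, x = am j)].

Definition nonseparable : Prop :=
  (forall j, relint (convhull (pts [set: 'I_p]%SET)) (am j)) /\
  exists D, Fn_cell D /\ forall j, D (am j).

Definition monom (a x : pt) : R := \prod_(k < n) powR (x 0 k) (a 0 k).

Definition signomial (cp : 'I_p -> R) (cm : 'I_m -> R) (x : pt) : R :=
  \sum_i cp i * monom (ap i) x - \sum_j cm j * monom (am j) x.

End Config.

Definition Sing_pos (f : pt -> R) (x : pt) : Prop :=
  (forall k, 0 < x 0 k) /\ f x = 0 /\
  forall k : 'I_n, derivable f x (delta_mx 0 k) /\
    x 0 k * derive f x (delta_mx 0 k) = 0.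

End Defs.

(* At the singular point 1, f = 0 and x_k d_k f = 0 say that the weights cp on
   A_+ and cm on A_- have equal total mass and equal first moments, i.e. cp is a
   nonnegative weight on A_+ with the cm-barycentre of A_-.  Every such
   "balanced" weight rho is a nonnegative combination of the weights of the
   simplices of Lambda.  If supp rho is affinely dependent, move rho along a
   dependency in both directions until a point of the support vanishes
   (Caratheodory) and write rho as an average of the two results.  If supp rho
   is affinely independent, any nonnegative heights vanishing on supp rho lift
   it into the lower face over D, because the face function is nonnegative at
   the barycentre (which lies in D) and nonpositive on supp rho; raising the
   heights off a dependent face shrinks it, so some such face is a simplex of
   Lambda, and on it rho is determined by its barycentric coordinates. *)

From HB Require Import structures.
From mathcomp Require Import all_boot all_order all_algebra.
From mathcomp Require Import all_classical all_reals all_analysis.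
From mathcomp Require Import ring lra.
Import Order.TTheory GRing.Theory Num.Theory.
Import numFieldNormedType.Exports.
Local Open Scope classical_set_scope.
Local Open Scope ring_scope.
Set Implicit Arguments.
Unset Strict Implicit.
Unset Printing Implicit Defensive.

Section SingularMoments.
Variables (R : realType) (n p m : nat).
Variables (ap : 'I_p -> 'rV[R]_n) (am : 'I_m -> 'rV[R]_n).
Variables (cp : 'I_p -> R) (cm : 'I_m -> R).

(* The signomial on the k-th coordinate line through 1, in terms of x_k. *)
Definition signomial_coord (k : 'I_n) (t : R) : R :=
  \sum_i cp i * powR t (ap i 0 k) - \sum_j cm j * powR t (am j 0 k).

Lemma monom_const1 (a : 'rV[R]_n) : monom a (const_mx 1) = 1.
Proof. by rewrite /monom big1 // => i _; rewrite mxE powR1. Qed.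

Lemma monom_shift_delta (a : 'rV[R]_n) k (h : R) :
  monom a (h *: delta_mx 0 k + const_mx 1) = powR (h + 1) (a 0 k).
Proof.
rewrite /monom (bigD1 k) //= big1 ?mulr1; first by rewrite !mxE !eqxx mulr1.
by move=> i ik; rewrite !mxE (negbTE ik) andbF mulr0 add0r powR1.
Qed.

Lemma derive_signomial_const1 k :
  derive (signomial ap am cp cm) (const_mx 1) (delta_mx 0 k) =
  derive (signomial_coord k) 1 1.
Proof.
rewrite /derive; suff -> :
    (fun h : R => h^-1 *: ((signomial ap am cp cm \o shift (const_mx 1))
      (h *: delta_mx 0 k) - signomial ap am cp cm (const_mx 1))) =
    (fun h : R => h^-1 *: ((signomial_coord k \o shift 1) (h *: 1) -
      signomial_coord k 1)) by [].
apply/funext => h /=.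
rewrite /signomial /signomial_coord; congr (_ *: (_ - _)).
  have hA : h%:A = h :> R by rewrite /GRing.scale /= mulr1.
  by congr (_ - _); apply: eq_bigr => i _; rewrite monom_shift_delta hA.
by rewrite !powR1; congr (_ - _); apply: eq_bigr => i _; rewrite monom_const1.
Qed.

Lemma is_derive_signomial_coord k : is_derive (1 : R) 1 (signomial_coord k)
  (\sum_i cp i * ap i 0 k - \sum_j cm j * am j 0 k).
Proof.
have -> : signomial_coord k =
    \sum_i (cp i \*: (fun t : R => powR t (ap i 0 k))) -
    \sum_j (cm j \*: (fun t : R => powR t (am j 0 k))).
  by apply/funext => t; rewrite /signomial_coord !fct_sumE.
have E (a : R) : a = a * 1 `^ (a - 1) by rewrite powR1 mulr1.
apply: is_deriveB; apply: is_derive_sum => i; rewrite [X in _ * X]E;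
  apply: is_deriveZ; exact: is_derive1_powR ltr01.
Qed.

Lemma Sing_pos_const1_moments :
  Sing_pos (signomial ap am cp cm) (const_mx 1) ->
  \sum_i cp i = \sum_j cm j /\ \sum_i cp i *: ap i = \sum_j cm j *: am j.
Proof.
move=> [_ [f0 hd]]; split.
  move/eqP: f0; rewrite /signomial subr_eq0.
  by under eq_bigr do rewrite monom_const1 mulr1;
     under [X in _ == X]eq_bigr do rewrite monom_const1 mulr1; move/eqP.
apply/rowP => k; have [_] := hd k.
rewrite mxE mul1r derive_signomial_const1.
have [_ ->] := is_derive_signomial_coord k; move/eqP; rewrite subr_eq0 => /eqP hk.
rewrite !summxE; under eq_bigr do rewrite mxE.
by rewrite hk; apply: eq_bigr => j _; rewrite mxE.
Qed.

End SingularMoments.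

Section AffineFunctionals.
Variables (R : realType) (n : nat).
Local Notation pt := 'rV[R]_n.

Lemma dotvD (u x y : pt) : dotv u (x + y) = dotv u x + dotv u y.
Proof. by rewrite /dotv -big_split; apply: eq_bigr => k _; rewrite mxE mulrDr. Qed.

Lemma dotvZ (u : pt) (c : R) (x : pt) : dotv u (c *: x) = c * dotv u x.
Proof. by rewrite /dotv mulr_sumr; apply: eq_bigr => k _; rewrite mxE mulrCA. Qed.

Lemma dotv0 (u : pt) : dotv u 0 = 0.
Proof. by rewrite /dotv big1 // => k _; rewrite mxE mulr0. Qed.

Lemma dotvBl (u1 u2 x : pt) : dotv (u1 - u2) x = dotv u1 x - dotv u2 x.
Proof. by rewrite /dotv -sumrB; apply: eq_bigr => k _; rewrite !mxE mulrBl. Qed.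

Lemma dotv_affine_comb (I : finType) (c : I -> R) (x : I -> pt) (u : pt) (h : R) :
  \sum_i c i * (dotv u (x i) + h) = dotv u (\sum_i c i *: x i) + h * \sum_i c i.
Proof.
rewrite (big_morph _ (dotvD u) (dotv0 u)) mulr_sumr -big_split.
by apply: eq_bigr => i _; rewrite dotvZ mulrDr [h * _]mulrC.
Qed.

End AffineFunctionals.

Section Barycentric.
Variables (R : realType) (n p : nat) (ap : 'I_p -> 'rV[R]_n).
Local Notation pt := 'rV[R]_n.
Implicit Types (V : {set 'I_p}) (x : pt) (lam mu : 'I_p -> R).

Lemma is_bary_affine V x lam u h : is_bary ap V x lam ->
  dotv u x + h = \sum_a lam a * (dotv u (ap a) + h).
Proof. by case=> _ [s1 <-]; rewrite dotv_affine_comb s1 mulr1. Qed.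

Lemma is_bary_comb V k (w : 'I_k -> R) (y : 'I_k -> pt) (L : 'I_k -> 'I_p -> R) :
  (forall i, is_bary ap V (y i) (L i)) -> \sum_i w i = 1 ->
  is_bary ap V (\sum_i w i *: y i) (fun a => \sum_i w i * L i a).
Proof.
move=> hL w1; split; [|split].
- move=> a aV; apply: big1 => i _; have [-> // _] := hL i; exact: mulr0.
- rewrite exchange_big /= -w1; apply: eq_bigr => i _; have [_ [s1 _]] := hL i.
  by rewrite -mulr_sumr s1 mulr1.
- under eq_bigr do rewrite scaler_suml.
  rewrite exchange_big /=; apply: eq_bigr => i _; have [_ [_ <-]] := hL i.
  by rewrite scaler_sumr; apply: eq_bigr => a _; rewrite scalerA.
Qed.

Lemma is_bary_vertex V a : a \in V -> is_bary ap V (ap a) (fun b => (b == a)%:R).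
Proof.
move=> aV; split; [|split].
- by move=> b bV; case: eqP => // eba; rewrite eba aV in bV.
- by rewrite (bigD1 a) //= eqxx big1 ?addr0 // => b /negbTE ->.
- by rewrite (bigD1 a) //= eqxx scale1r big1 ?addr0 // => b /negbTE ->; rewrite scale0r.
Qed.

Lemma convhull_is_bary V x : convhull (pts ap V) x ->
  exists2 lam, (forall a, 0 <= lam a) & is_bary ap V x lam.
Proof.
move=> [k [w [y [hy [w0 [w1 ->]]]]]]; have [j hj] := choice hy.
exists (fun a => \sum_i w i * (a == j i)%:R).
  by move=> a; apply: sumr_ge0 => i _; rewrite mulr_ge0 ?ler0n.
by apply: is_bary_comb => // i; have [jV ->] := hj i; exact: is_bary_vertex.
Qed.

Lemma aff_hull_convhull_is_bary V x : aff_hull (convhull (pts ap V)) x ->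
  exists lam, is_bary ap V x lam.
Proof.
move=> [k [w [y [hy [w1 ->]]]]].
have /choice [L hL] : forall i, exists l, is_bary ap V (y i) l.
  by move=> i; have [lam _ hl] := convhull_is_bary (hy i); exists lam.
by exists (fun a => \sum_i w i * L i a); exact: is_bary_comb.
Qed.

Lemma is_bary_bary V x :
  (exists lam, is_bary ap V x lam) -> is_bary ap V x (bary ap V x).
Proof. by move=> h; rewrite /bary; case: pselect => // h'; case: (cid h'). Qed.

Definition aff_relation V mu : Prop :=
  [/\ forall a, a \notin V -> mu a = 0, \sum_a mu a = 0 & \sum_a mu a *: ap a = 0].

Definition aff_indep V : Prop := forall mu, aff_relation V mu -> forall a, mu a = 0.

Lemma aff_relationN V mu : aff_relation V mu -> aff_relation V (fun a => - mu a).
Proof.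
case=> hz hs hv; split; first by move=> a /hz ->; rewrite oppr0.
  by rewrite sumrN hs oppr0.
by under eq_bigr do rewrite scaleNr; rewrite sumrN hv oppr0.
Qed.

Lemma not_aff_indep V :
  ~ aff_indep V -> exists mu, aff_relation V mu /\ exists a, mu a != 0.
Proof.
move=> hV; apply: contrapT => hn; apply: hV => mu hmu a.
by apply/eqP/negPn/negP => hna; apply: hn; exists mu; split; last exists a.
Qed.

(* The rows (1, a) for a in V: affine independence and affine spanning of V
   become row freeness and row fullness of this matrix. *)
Definition lift_mx V : 'M[R]_(#|V|, 1 + n) :=
  row_mx (const_mx 1) (\matrix_(i, j) ap (enum_val i) 0 j).

Lemma mul_lift_mx V (r : 'rV[R]_#|V|) : r *m lift_mx V =
  row_mx (const_mx (\sum_i r 0 i)) (\sum_i r 0 i *: ap (enum_val i)).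
Proof.
rewrite mul_mx_row; congr row_mx; apply/matrixP => i j; rewrite (ord1 i) !mxE.
  by apply: eq_bigr => k _; rewrite mxE mulr1.
by rewrite summxE; apply: eq_bigr => k _; rewrite !mxE.
Qed.

Lemma row_free_lift_mx V : aff_indep V -> row_free (lift_mx V).
Proof.
move=> hV; rewrite -kermx_eq0; apply/rowV0P => v /sub_kermxP.
rewrite mul_lift_mx -row_mx0 => /eq_row_mx [hs hv].
pose mu a := \sum_(i | enum_val i == a) v 0 i.
have sum_fibres (T : nmodType) (F : 'I_#|V| -> T) :
    \sum_a \sum_(i | enum_val i == a) F i = \sum_i F i.
  by rewrite [RHS](partition_big (fun i => enum_val i) predT).
have mu0 : forall a, mu a = 0.
  apply: hV; split.
  - by move=> a aV; apply: big1 => i /eqP ea; rewrite -ea enum_valP in aV.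
  - rewrite sum_fibres.
    by have := congr1 (fun N : 'M[R]_1 => N 0 0) hs; rewrite !mxE.
  - rewrite -[RHS]hv -sum_fibres; apply: eq_bigr => a _; rewrite /mu scaler_suml.
    by apply: eq_bigr => i /eqP ->.
apply/rowP => i; rewrite mxE -(mu0 (enum_val i)) /mu (big_pred1 i) //.
by move=> k /=; rewrite (inj_eq enum_val_inj).
Qed.

Lemma row_full_lift_mx V : (forall x, exists lam, is_bary ap V x lam) ->
  row_full (lift_mx V).
Proof.
move=> hV; pose e (x : pt) : 'rV[R]_(1 + n) := row_mx (const_mx 1) x.
have e_sub x : (e x <= lift_mx V)%MS.
  have [lam [z1 [s1 e1]]] := hV x.
  suff -> : e x = (\row_i lam (enum_val i)) *m lift_mx V by exact: submxMl.
  rewrite mul_lift_mx; congr row_mx.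
    apply/matrixP => ? ?; rewrite !mxE -[LHS]s1 (bigID (mem V)) /=.
    rewrite [X in _ + X]big1 ?addr0 => [|a /z1 //].
    by rewrite big_enum_val; apply: eq_bigr => i _; rewrite mxE.
  rewrite -e1 (bigID (mem V)) /= [X in _ + X]big1 ?addr0 => [|a /z1 ->]; last first.
    exact: scale0r.
  by rewrite big_enum_val; apply: eq_bigr => i _; rewrite mxE.
rewrite -sub1mx; apply/row_subP => i; move: (row i _) => v.
rewrite -(hsubmxK v); set c := lsubmx v 0 0.
have -> : row_mx (lsubmx v) (rsubmx v) = c *: e 0 + (e (rsubmx v) - e 0).
  rewrite /e scale_row_mx opp_row_mx !add_row_mx scaler0 subrr add0r !addr0 subr0.
  by congr row_mx; apply/matrixP => a b; rewrite !ord1 !mxE mulr1 /c mxE.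
by rewrite addmx_sub ?scalemx_sub ?addmx_sub ?eqmx_opp.
Qed.

Lemma aff_indep_spanning_card V : aff_indep V ->
  (forall x, exists lam, is_bary ap V x lam) -> #|V| = n.+1.
Proof.
move=> /row_free_lift_mx /eqP fr /row_full_lift_mx /eqP fl.
by rewrite -fr fl.
Qed.

End Barycentric.

Section Weights.
Variables (R : realFieldType) (I : finType).
Implicit Types (rho nu : I -> R).

Definition supp rho : {set I} := [set a | rho a != 0].

Lemma supp_subset_eq0 rho (F : {set I}) a :
  supp rho \subset F -> a \notin F -> rho a = 0.
Proof. by move=> sF; apply: contraNeq => ra; rewrite (fintype.subsetP sF) // inE. Qed.

Lemma sum_eq0_exists_lt0 nu a0 : \sum_a nu a = 0 -> nu a0 != 0 -> exists a, nu a < 0.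
Proof.
move=> s0; apply: contraNP => hn; apply/eqP.
apply: (@psumr_eq0P _ _ predT nu) => // a _; rewrite leNgt; apply/negP => ?.
by apply: hn; exists a.
Qed.

Lemma max_step_nonneg rho nu : (forall a, 0 <= rho a) ->
  (forall a, a \notin supp rho -> nu a = 0) -> (exists a, nu a < 0) ->
  exists2 t, 0 < t & (forall a, 0 <= rho a + t * nu a) /\
    exists2 b, b \in supp rho & rho b + t * nu b = 0.
Proof.
move=> r0 hs [a0 na0].
have [b nb bmin] :=
  @arg_minP _ _ _ a0 [pred a | nu a < 0] (fun a => rho a / - nu a) na0.
have bS : b \in supp rho by apply: contraT => /hs nb0; move: nb; rewrite /= nb0 ltxx.
have rb : 0 < rho b by rewrite lt_neqAle eq_sym r0 andbT; move: bS; rewrite inE.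
exists (rho b / - nu b); first by rewrite divr_gt0 // oppr_gt0.
split; last by exists b => //; field; rewrite lt_eqF.
move=> a; case: (leP 0 (nu a)) => hna.
  by rewrite addr_ge0 // mulr_ge0 // divr_ge0 // oppr_ge0 ltW.
have := bmin a hna; rewrite /= => hm.
rewrite -[X in 0 <= _ + X]opprK -mulrN subr_ge0 -ler_pdivlMr //.
by rewrite oppr_gt0.
Qed.

Lemma supp_step_proper rho nu t b : (forall a, a \notin supp rho -> nu a = 0) ->
  b \in supp rho -> rho b + t * nu b = 0 ->
  supp (fun a => rho a + t * nu a) \proper supp rho.
Proof.
move=> hs bS bz; rewrite finset.properEneq; apply/andP; split.
  by apply/eqP => e; move: bS; rewrite -e inE bz eqxx.
apply/fintype.subsetP => a; rewrite !inE; apply: contraNN => /eqP ra.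
by rewrite ra hs ?mulr0 ?addr0 // inE ra negbK.
Qed.

Lemma split_along_relation rho nu a0 : (forall a, 0 <= rho a) ->
  (forall a, a \notin supp rho -> nu a = 0) -> \sum_a nu a = 0 -> nu a0 != 0 ->
  exists t1 t2, [/\ 0 < t1, 0 < t2,
    (forall a, 0 <= rho a + t1 * nu a) /\
       supp (fun a => rho a + t1 * nu a) \proper supp rho &
    (forall a, 0 <= rho a + t2 * - nu a) /\
       supp (fun a => rho a + t2 * - nu a) \proper supp rho].
Proof.
move=> r0 hs s0 na0.
have hsN a : a \notin supp rho -> - nu a = 0 by move/hs ->; rewrite oppr0.
have [t1 t1p [h1 [b1 b1S b1z]]] := max_step_nonneg r0 hs (sum_eq0_exists_lt0 s0 na0).
have sN0 : \sum_a - nu a = 0 by rewrite sumrN s0 oppr0.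
have naN0 : - nu a0 != 0 by rewrite oppr_eq0.
have [t2 t2p [h2 [b2 b2S b2z]]] :=
  max_step_nonneg r0 hsN (sum_eq0_exists_lt0 sN0 naN0).
exists t1, t2; split => //; split => //.
  exact: supp_step_proper b1S b1z.
exact: supp_step_proper b2S b2z.
Qed.

End Weights.

Section FullDimensional.
Variables (R : realType) (n : nat).
Local Notation pt := 'rV[R]_n.

Lemma full_dim_affine_bound (D : set pt) (z : pt) : full_dim D ->
  exists2 K, 0 <= K & forall (u : pt) (h : R),
    (forall x, D x -> 0 <= dotv u x + h <= 1) -> dotv u z + h <= K.
Proof.
move=> fullD; have : aff_hull D z by rewrite fullD.
move=> [k [c [x [Dx [c1 ->]]]]].
exists (\sum_i `|c i|) => [|u h hD]; first by rewrite sumr_ge0.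
rewrite -[h]mulr1 -c1 -dotv_affine_comb; apply: ler_sum => i _.
have /andP [d0 d1] := hD _ (Dx i).
by rewrite (le_trans (ler_norm _)) // normrM (ger0_norm d0) ler_piMr.
Qed.

Variables (p : nat) (ap : 'I_p -> pt).

Lemma in_Lambda_of_aff_indep (D : set pt) (F : {set 'I_p}) : full_dim D ->
  aff_indep ap F -> (forall x, D x -> convhull (pts ap F) x) -> in_Lambda ap D F.
Proof.
move=> fullD hF DF.
have fullF : full_dim (convhull (pts ap F)).
  apply/seteqP; split => // x _; have : aff_hull D x by rewrite fullD.
  by move=> [k [c [y [Dy hy]]]]; exists k, c, y; split => // i; exact: DF.
split; last split => //.
  apply: aff_indep_spanning_card hF _ => x.
  by apply: aff_hull_convhull_is_bary; rewrite fullF.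
move=> x [Dx [e [e0 he]]]; split; first exact: DF.
by exists e; split => // y _ hy; apply: DF; apply: he; rewrite ?fullD.
Qed.

End FullDimensional.

Section LowerFaces.
Variables (R : realType) (n p m : nat).
Variables (ap : 'I_p -> 'rV[R]_n) (am : 'I_m -> 'rV[R]_n) (cm : 'I_m -> R).
Variable D : set 'rV[R]_n.
(* For each height function w on A_+, the affine function face_fun w supports
   the lifted points from below, and the points it touches span a cell of the
   regular subdivision of w that contains D. *)
Variables (U : ('I_p -> R) -> 'rV[R]_n) (H : ('I_p -> R) -> R).
Local Notation pt := 'rV[R]_n.
Implicit Types (w : 'I_p -> R) (rho mu : 'I_p -> R) (S F : {set 'I_p}).

Definition face_fun w (x : pt) : R := dotv (U w) x + H w.

Definition face w : {set 'I_p} := [set a | face_fun w (ap a) == w a].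

Definition total_cm : R := \sum_j cm j.

Definition moment_cm : pt := \sum_j cm j *: am j.

Definition balanced rho : Prop :=
  total_cm *: \sum_a rho a *: ap a = (\sum_a rho a) *: moment_cm.

Definition heights_on S w : Prop :=
  (forall a, 0 <= w a) /\ (forall a, a \in S -> w a = 0).

Definition raise w f0 (M : R) : 'I_p -> R :=
  fun a => w a + (a == f0)%:R + (a \notin face w)%:R * M.

Hypothesis face_fun_le : forall w a, face_fun w (ap a) <= w a.
Hypothesis D_sub_face : forall w x, D x -> convhull (pts ap (face w)) x.
Hypothesis fullD : full_dim D.
Hypothesis am_in_D : forall j, D (am j).
Hypothesis cm_ge0 : forall j, 0 <= cm j.
Hypothesis total_cm_gt0 : 0 < total_cm.

Lemma face_funE w a : a \in face w -> face_fun w (ap a) = w a.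
Proof. by rewrite inE => /eqP. Qed.

Lemma face_fun_sub w w' x :
  face_fun w' x - face_fun w x = dotv (U w' - U w) x + (H w' - H w).
Proof. by rewrite /face_fun dotvBl; ring. Qed.

Lemma face_fun_D_le w w' c x : D x ->
  (forall a, a \in face w -> face_fun w' (ap a) <= w a + c) ->
  face_fun w' x <= face_fun w x + c.
Proof.
move=> Dx hle; have [lam l0 hl] := convhull_is_bary (D_sub_face w Dx).
rewrite /face_fun -addrA !(is_bary_affine _ _ hl); apply: ler_sum => a _.
have [lam0 _] := hl; case: (boolP (a \in face w)) => aF; last by rewrite lam0 // !mul0r.
by rewrite ler_wpM2l // addrA -[_ + H w]/(face_fun w (ap a)) face_funE // hle.
Qed.

Lemma face_fun_am_ge0 w j : (forall a, 0 <= w a) -> 0 <= face_fun w (am j).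
Proof.
move=> w0; have [lam l0 hl] := convhull_is_bary (D_sub_face w (am_in_D j)).
rewrite /face_fun (is_bary_affine _ _ hl); apply: sumr_ge0 => a _.
have [lam0 _] := hl; case: (boolP (a \in face w)) => aF; last by rewrite lam0 // mul0r.
by rewrite mulr_ge0 // -[_ + H w]/(face_fun w (ap a)) face_funE.
Qed.

Lemma balanced_face_fun w rho : balanced rho ->
  total_cm * \sum_a rho a * face_fun w (ap a) =
  (\sum_a rho a) * \sum_j cm j * face_fun w (am j).
Proof.
move=> hb; rewrite /face_fun !dotv_affine_comb mulrDr -dotvZ hb dotvZ.
by rewrite /moment_cm /total_cm; ring.
Qed.

(* A balanced weight has the barycentre of the points am j, which lie in D, so
   the face function of nonnegative heights is nonnegative on average over rho,
   while it is nonpositive at every point of a support where the heights vanish. *)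
Lemma supp_sub_face rho w : (forall a, 0 <= rho a) -> balanced rho ->
  heights_on (supp rho) w -> supp rho \subset face w.
Proof.
move=> r0 hb [w0 wS].
have term_le0 a : rho a * face_fun w (ap a) <= 0.
  case: (boolP (a \in supp rho)) => aS; first by rewrite mulr_ge0_le0 // -(wS a aS).
  by move: aS; rewrite inE negbK => /eqP ->; rewrite mul0r.
have sum_ge0 : 0 <= \sum_a rho a * face_fun w (ap a).
  rewrite -(pmulr_rge0 _ total_cm_gt0) balanced_face_fun // mulr_ge0 ?sumr_ge0 //.
  by move=> j _; rewrite mulr_ge0 ?face_fun_am_ge0.
have term0 a : rho a * face_fun w (ap a) = 0.
  apply/eqP; rewrite -oppr_eq0; apply/eqP; move: a isT.
  apply: (@psumr_eq0P _ _ predT) => [a _|]; first by rewrite oppr_ge0.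
  apply/eqP; rewrite eq_le sumrN oppr_le0 sum_ge0 oppr_ge0 /=.
  exact: sumr_le0.
apply/fintype.subsetP => a aS; rewrite inE (wS a aS).
have /eqP := term0 a; rewrite mulf_eq0 => /orP [|//].
by move: aS; rewrite inE => /negPf ->.
Qed.

Lemma heights_on_raise S w f0 M : heights_on S w -> S \subset face w ->
  f0 \notin S -> 0 <= M -> heights_on S (raise w f0 M).
Proof.
move=> [w0 wS] SF f0S M0; split=> [a|a aS]; first by rewrite !addr_ge0 ?mulr_ge0.
have af0 : a != f0 by apply: contraNneq f0S => <-.
by rewrite /raise (fintype.subsetP SF a aS) (negbTE af0) wS // mul0r !addr0.
Qed.

Lemma face_fun_raise_unit w f0 M x : 0 <= M -> D x ->
  0 <= face_fun (raise w f0 M) x - face_fun w x <= 1.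
Proof.
move=> M0 Dx; rewrite subr_ge0 lerBlDl; apply/andP; split.
  rewrite -[face_fun (raise _ _ _) x]addr0; apply: face_fun_D_le => // a _.
  rewrite addr0 (le_trans (face_fun_le _ _)) // /raise -addrA lerDl.
  by rewrite addr_ge0 ?mulr_ge0.
apply: face_fun_D_le => // a aF.
rewrite (le_trans (face_fun_le _ _)) // /raise aF mul0r addr0 lerD2l.
by case: (a == f0); rewrite ?ler01.
Qed.

(* The extra height M on the points off face w, larger than any possible
   increase of the face function there, keeps them off the new face. *)
Lemma face_raise_sub : exists2 M, 0 <= M &
  forall w f0, face (raise w f0 M) \subset face w.
Proof.
have /choice [K hK] : forall a, exists K, 0 <= K /\ forall u h,
    (forall x, D x -> 0 <= dotv u x + h <= 1) -> dotv u (ap a) + h <= K.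
  by move=> a; have [K K0 hK] := full_dim_affine_bound (ap a) fullD; exists K.
have K0 a : 0 <= K a by have [] := hK a.
have KS a : K a <= \sum_b K b by rewrite (bigD1 a) //= lerDl sumr_ge0.
exists (\sum_b K b) => [|w f0]; first exact: sumr_ge0.
apply/fintype.subsetP => a a2; apply: contraT => aF.
have lt_w : face_fun w (ap a) < w a.
  by rewrite lt_neqAle face_fun_le andbT; rewrite inE in aF.
have incr : face_fun (raise w f0 (\sum_b K b)) (ap a) - face_fun w (ap a) <= K a.
  rewrite face_fun_sub; apply: (hK a).2 => x Dx; rewrite -face_fun_sub.
  exact: face_fun_raise_unit (sumr_ge0 _ _) Dx.
move: incr; rewrite face_funE // /raise (negbTE aF) mul1r.
have := KS a; have : 0 <= (a == f0)%:R :> R by [].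
lra.
Qed.

(* The face function changes by an affine function, which an affine relation
   of face w annihilates; if the face did not change, that change would be the
   indicator of f0 on face w. *)
Lemma face_raise_neq w f0 M mu : f0 \in face w -> aff_relation ap (face w) mu ->
  mu f0 != 0 -> face (raise w f0 M) != face w.
Proof.
move=> f0F [mz ms mv]; apply: contra => /eqP e.
have diff a : a \in face w ->
    face_fun (raise w f0 M) (ap a) - face_fun w (ap a) = (a == f0)%:R.
  by move=> aF; rewrite !face_funE ?e // /raise aF mul0r addr0 addrAC subrr add0r.
have : \sum_a mu a * (face_fun (raise w f0 M) (ap a) - face_fun w (ap a)) = 0.
  under eq_bigr do rewrite face_fun_sub.
  by rewrite dotv_affine_comb mv dotv0 ms mulr0 addr0.
rewrite (bigD1 f0) //= diff // eqxx mulr1 big1 ?addr0 => [->//|a af0].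
case: (boolP (a \in face w)) => aF; last by rewrite mz // mul0r.
by rewrite diff // (negbTE af0) mulr0.
Qed.

Lemma exists_smaller_face S w : aff_indep ap S ->
  (forall w', heights_on S w' -> S \subset face w') -> heights_on S w ->
  ~ aff_indep ap (face w) -> exists2 w', heights_on S w' & face w' \proper face w.
Proof.
move=> hS Sface hw hnot.
have [mu [hmu [a0 ma0]]] := not_aff_indep hnot; have [mz ms mv] := hmu.
have [f0 f0S mf0] : exists2 f0, f0 \notin S & mu f0 != 0.
  apply: contrapT => hn; move/eqP: ma0; apply; apply: hS; split => // a aS.
  by case: (eqVneq (mu a) 0) => // ma; exfalso; apply: hn; exists a.
have f0F : f0 \in face w by apply: contraT => /mz /eqP; rewrite (negbTE mf0).
have [M M0 Msub] := face_raise_sub.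
exists (raise w f0 M); first by apply: heights_on_raise => //; exact: Sface.
by rewrite finset.properEneq (face_raise_neq M f0F hmu mf0) Msub.
Qed.

Lemma exists_aff_indep_face S : aff_indep ap S ->
  (forall w, heights_on S w -> S \subset face w) ->
  exists2 w, heights_on S w & aff_indep ap (face w).
Proof.
move=> hS Sface.
have h0 : heights_on S (fun=> 0) by [].
have [k] := ubnP #|face (fun=> 0)|; elim: k (fun=> 0) h0 => // k IH w hw hk.
case: (pselect (aff_indep ap (face w))) => hF; first by exists w.
have [w' hw' /proper_card lt'] := exists_smaller_face hS Sface hw hF.
by apply: IH hw' (leq_trans lt' _).
Qed.

Definition representable rho : Prop := exists delta : {set 'I_p} -> R,
  (forall V, in_Lambda ap D V -> 0 <= delta V) /\
  forall a, rho a = \sum_(V : {set 'I_p} | `[< in_Lambda ap D V >] && (a \in V))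
                      delta V * (\sum_j bary ap V (am j) a * cm j).

Lemma representable_conic r1 r2 (al be : R) : 0 <= al -> 0 <= be ->
  representable r1 -> representable r2 ->
  representable (fun a => al * r1 a + be * r2 a).
Proof.
move=> al0 be0 [d1 [d1_ge0 h1]] [d2 [d2_ge0 h2]].
exists (fun V => al * d1 V + be * d2 V); split=> [V hV|a].
  by rewrite addr_ge0 // mulr_ge0 // ?d1_ge0 ?d2_ge0.
rewrite h1 h2 !mulr_sumr -big_split; apply: eq_bigr => V _.
by rewrite mulrDl !mulrA.
Qed.

Lemma balanced_add_relation rho mu V t : balanced rho ->
  aff_relation ap V mu -> balanced (fun a => rho a + t * mu a).
Proof.
move=> hb [_ ms mv]; rewrite /balanced big_split /= -mulr_sumr ms mulr0 addr0.
under eq_bigr do rewrite scalerDl -scalerA.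
by rewrite big_split /= -scaler_sumr mv scaler0 addr0.
Qed.

Lemma balanced_simplex_weight F rho : aff_indep ap F ->
  (forall x, exists lam, is_bary ap F x lam) -> supp rho \subset F ->
  balanced rho -> forall a,
  rho a = (\sum_b rho b) / total_cm * \sum_j bary ap F (am j) a * cm j.
Proof.
move=> hF spanF sF hb; set s := \sum_b rho b.
have C0 : total_cm != 0 by rewrite gt_eqF.
have w1 : \sum_j cm j / total_cm = 1 by rewrite -mulr_suml divff.
pose l a := \sum_j cm j / total_cm * bary ap F (am j) a.
have [z1 [s1 e1]] : is_bary ap F (\sum_j (cm j / total_cm) *: am j) l :=
  is_bary_comb (fun j => is_bary_bary (spanF (am j))) w1.
have hB : \sum_j (cm j / total_cm) *: am j = total_cm^-1 *: moment_cm.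
  by rewrite scaler_sumr; apply: eq_bigr => j _; rewrite scalerA mulrC.
have rel : forall a, rho a - s * l a = 0.
  apply: hF; split.
  - by move=> a aF; rewrite z1 // (supp_subset_eq0 sF) // mulr0 subr0.
  - by rewrite sumrB -mulr_sumr s1 mulr1 subrr.
  - apply: (scalerI C0); under eq_bigr do rewrite scalerBl -scalerA.
    rewrite sumrB -scaler_sumr e1 scalerBr hb hB !scalerA mulrAC mulfV // mul1r.
    by rewrite subrr scaler0.
move=> a; move/eqP: (rel a); rewrite subr_eq0 => /eqP ->.
rewrite -mulrA /l; congr (_ * _); rewrite mulr_sumr; apply: eq_bigr => j _.
ring.
Qed.

Lemma representable_simplex F rho : aff_indep ap F -> in_Lambda ap D F ->
  supp rho \subset F -> (forall a, 0 <= rho a) -> balanced rho ->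
  representable rho.
Proof.
move=> hF LF sF r0 hb; have [_ [fullF _]] := LF.
have spanF x : exists lam, is_bary ap F x lam.
  by apply: aff_hull_convhull_is_bary; rewrite fullF.
exists (fun V => if V == F then (\sum_b rho b) / total_cm else 0); split=> [V _|a].
  by case: eqP => // _; rewrite divr_ge0 ?sumr_ge0 ?ltW.
case: (boolP (a \in F)) => aF.
  rewrite (bigD1 F) /=; last by rewrite aF andbT; apply/asboolP.
  rewrite eqxx [X in _ + X]big1 ?addr0 ?(balanced_simplex_weight hF spanF sF hb) //.
  by move=> V /andP [_ /negbTE ->]; rewrite mul0r.
rewrite (supp_subset_eq0 sF) // big1 // => V /andP [_ aV].
by case: eqP => [eVF|_]; [rewrite -eVF aV in aF | rewrite mul0r].
Qed.

Lemma balanced_representable rho : (forall a, 0 <= rho a) -> balanced rho ->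
  representable rho.
Proof.
have [k] := ubnP #|supp rho|; elim: k rho => // k IH rho hk r0 hb.
case: (pselect (aff_indep ap (supp rho))) => hS.
  have Sface w : heights_on (supp rho) w -> supp rho \subset face w.
    exact: supp_sub_face.
  have [w hw hF] := exists_aff_indep_face hS Sface.
  apply: (representable_simplex hF _ (Sface w hw) r0 hb).
  exact: in_Lambda_of_aff_indep fullD hF (D_sub_face w).
have [mu [hmu [a0 ma0]]] := not_aff_indep hS; have [mz ms _] := hmu.
have [t1 [t2 [t1_gt0 t2_gt0 [r1 lt1] [r2 lt2]]]] := split_along_relation r0 mz ms ma0.
have rep1 := IH _ (leq_trans (proper_card lt1) hk) r1 (balanced_add_relation t1 hb hmu).
have rep2 := IH _ (leq_trans (proper_card lt2) hk) r2
  (balanced_add_relation t2 hb (aff_relationN hmu)).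
have -> : rho = fun a => t2 / (t1 + t2) * (rho a + t1 * mu a) +
                         t1 / (t1 + t2) * (rho a + t2 * - mu a).
  by apply/funext => a; field; rewrite gt_eqF ?addr_gt0.
by apply: representable_conic rep1 rep2; rewrite divr_ge0 ?ltW ?addr_gt0.
Qed.

End LowerFaces.

Theorem lemma3p13 (R : realType) (n p m : nat)
  (ap : 'I_p -> 'rV[R]_n) (am : 'I_m -> 'rV[R]_n)
  (cp : 'I_p -> R) (cm : 'I_m -> R) (D : set 'rV[R]_n) :
  injective ap -> injective am -> (forall i j, ap i <> am j) ->
  full_dim (convhull (allpts ap am)) ->
  nonseparable ap am ->
  Fn_cell ap D -> (forall j, D (am j)) ->
  (forall i, 0 < cp i) -> (forall j, 0 < cm j) ->
  Sing_pos (signomial ap am cp cm) (const_mx 1) ->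
  exists delta : {set 'I_p} -> R,
    (forall V, in_Lambda ap D V -> 0 <= delta V) /\
    forall a : 'I_p,
      cp a = \sum_(V : {set 'I_p} | `[< in_Lambda ap D V >] && (a \in V))
               delta V * (\sum_j bary ap V (am j) a * cm j).
Proof.
move=> _ _ _ _ _ [[sel [hsel hD]] fullD] am_in_D cp_gt0 cm_gt0.
move=> /Sing_pos_const1_moments [mass moment].
have [p0|p_gt0] := posnP p.
  by exists (fun=> 0); split=> // a; have := ltn_ord a; rewrite {2}p0.
have [U /choice [H hUH]] := choice hsel.
have mass_gt0 : 0 < total_cm cm.
  rewrite /total_cm -mass (bigD1 (Ordinal p_gt0)) //= ltr_pwDl ?sumr_ge0 //.
  by move=> i _; exact: ltW.
apply: (balanced_representable (U := U) (H := H)) => //.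
- by move=> w a; exact: (hUH w).1.
- by move=> w x; rewrite hD => /(_ w); have [_ [_ <-]] := hUH w.
- by move=> j; exact: ltW.
- by move=> a; exact: ltW.
- by rewrite /balanced mass moment.
Qed.
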